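(* Let $\boldsymbol{A},\boldsymbol{B}\in\mathsf{ISL}$ and let $\mathbb{X},\mathbb{Y}$ be posets. (i) If $f\colon\boldsymbol{A}\to\boldsymbol{B}$ is a homomorphism, then $f_\ast\colon\boldsymbol{B}_\ast\rightharpoonup\boldsymbol{A}_\ast$ is a partial positive p-morphism. (ii) If $p\colon\mathbb{X}\rightharpoonup\mathbb{Y}$ is a partial positive p-morphism, then $\mathsf{Up}_{\mathsf{ISL}}(p)\colon\mathsf{Up}_{\mathsf{ISL}}(\mathbb{Y})\to\mathsf{Up}_{\mathsf{ISL}}(\mathbb{X})$ is a homomorphism.
   Context: $\mathsf{ISL}$ is the class of implicative semilattices $\langle A;\land,\to,1\rangle$: $\langle A;\land\rangle$ is a semilattice (order $a\le b$ iff $a\land b=a$) with maximum $1$ and $c\land a\le b\iff c\le a\to b$ for all $a,b,c$. A filter is a nonempty upset closed under $\land$; it is meet irreducible if proper and not the intersection of two filters both different from it; $\boldsymbol{A}_\ast$ is the poset of meet irreducible filters under inclusion. A partial function $p\colon X\rightharpoonup Y$ is a function from $\mathsf{dom}(p)\subseteq X$ to $Y$; between posets it is order preserving if $x\le z$ in $\mathsf{dom}(p)$ implies $p(x)\le p(z)$. An order preserving $p\colon\mathbb{X}\rightharpoonup\mathbb{Y}$ is a partial positive p-morphism if whenever $x\in\mathsf{dom}(p)$, $y\in Y$, $p(x)\le y$, there is $z\in\mathsf{dom}(p)$ with $x\le z$ and $y=p(z)$. For a homomorphism $f$, $f_\ast$ has domain $\{F\in\boldsymbol{B}_\ast: f^{-1}[F]\in\boldsymbol{A}_\ast\}$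 and $f_\ast(F)=f^{-1}[F]$. For a poset $\mathbb{X}$, $\mathsf{Up}_{\mathsf{ISL}}(\mathbb{X})=\langle\mathsf{Up}(\mathbb{X});\cap,\to,X\rangle$ with $\mathsf{Up}(\mathbb{X})$ the set of upsets and $U\to V=X\smallsetminus{\downarrow}(U\smallsetminus V)$; and $\mathsf{Up}_{\mathsf{ISL}}(p)(U)=X\smallsetminus{\downarrow}p^{-1}[Y\smallsetminus U]$. *)

From Stdlib Require Import ClassicalEpsilon.


Record ISLsig := {
  car :> Type;
  meet : car -> car -> car;
  imp : car -> car -> car;
  top : car
}.

Definition isl_le (A : ISLsig) (a b : A) : Prop := meet A a b = a.

Definition is_ISL (A : ISLsig) : Prop :=
  (forall a b c : A, meet A a (meet A b c) = meet A (meet A a b) c) /\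
  (forall a b : A, meet A a b = meet A b a) /\
  (forall a : A, meet A a a = a) /\
  (forall a : A, isl_le A a (top A)) /\
  (forall a b c : A, isl_le A (meet A c a) b <-> isl_le A c (imp A a b)).

Definition is_hom (A B : ISLsig) (f : A -> B) : Prop :=
  (forall a b : A, f (meet A a b) = meet B (f a) (f b)) /\
  (forall a b : A, f (imp A a b) = imp B (f a) (f b)) /\
  f (top A) = top B.

Definition is_filter (A : ISLsig) (F : A -> Prop) : Prop :=
  (exists a, F a) /\
  (forall a b : A, F a -> isl_le A a b -> F b) /\
  (forall a b : A, F a -> F b -> F (meet A a b)).

Definition same_set (T : Type) (F G : T -> Prop) : Prop := forall x, F x <-> G x.

Definition meet_irreducible (A : ISLsig) (F : A -> Prop) : Prop :=
  is_filter A F /\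
  (exists a, ~ F a) /\
  ~ (exists G H : A -> Prop,
        is_filter A G /\ is_filter A H /\ ~ same_set _ G F /\ ~ same_set _ H F /\
        same_set _ F (fun a => G a /\ H a)).

Definition MIF (A : ISLsig) : Type := { F : A -> Prop | meet_irreducible A F }.

Definition MIF_le (A : ISLsig) (F G : MIF A) : Prop :=
  forall a, proj1_sig F a -> proj1_sig G a.

Definition f_star (A B : ISLsig) (f : A -> B) (F : MIF B) : option (MIF A) :=
  match excluded_middle_informative
          (meet_irreducible A (fun a => proj1_sig F (f a))) with
  | left H => Some (exist _ (fun a => proj1_sig F (f a)) H)
  | right _ => None
  end.

Record Poset := {
  pcar :> Type;
  ple : pcar -> pcar -> Prop;
  ple_refl : forall x, ple x x;
  ple_antisym : forall x y, ple x y -> ple y x -> x = y;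
  ple_trans : forall x y z, ple x y -> ple y z -> ple x z
}.

(* a partial function p : X -/-> Y is a function X -> option Y;
   dom(p) = {x | p x <> None} *)
Definition partial_order_preserving (X Y : Type) (leX : X -> X -> Prop)
  (leY : Y -> Y -> Prop) (p : X -> option Y) : Prop :=
  forall x z x' z', p x = Some x' -> p z = Some z' -> leX x z -> leY x' z'.

Definition partial_positive_pmorphism (X Y : Type) (leX : X -> X -> Prop)
  (leY : Y -> Y -> Prop) (p : X -> option Y) : Prop :=
  partial_order_preserving X Y leX leY p /\
  (forall x x' y, p x = Some x' -> leY x' y ->
     exists z, leX x z /\ p z = Some y).

Definition is_upset (X : Poset) (U : X -> Prop) : Prop :=
  forall x y, U x -> ple X x y -> U y.

Definition UpT (X : Poset) : Type := { U : X -> Prop | is_upset X U }.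

Definition compl_down (X : Poset) (S : X -> Prop) : X -> Prop :=
  fun x => ~ exists y, ple X x y /\ S y.

Lemma compl_down_upset (X : Poset) (S : X -> Prop) : is_upset X (compl_down X S).
Proof.
  intros x y Hx Hxy [z [Hyz Hz]]. apply Hx. exists z. split; [|exact Hz].
  exact (ple_trans X _ _ _ Hxy Hyz).
Qed.

Lemma cap_upset (X : Poset) (U V : UpT X) :
  is_upset X (fun x => proj1_sig U x /\ proj1_sig V x).
Proof.
  intros x y [Hu Hv] Hxy. split.
  - exact (proj2_sig U x y Hu Hxy).
  - exact (proj2_sig V x y Hv Hxy).
Qed.

Lemma full_upset (X : Poset) : is_upset X (fun _ : X => True).
Proof. intros x y _ _; exact I. Qed.

Definition Up_meet (X : Poset) (U V : UpT X) : UpT X :=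
  exist _ (fun x => proj1_sig U x /\ proj1_sig V x) (cap_upset X U V).

Definition Up_imp (X : Poset) (U V : UpT X) : UpT X :=
  exist _ (compl_down X (fun x => proj1_sig U x /\ ~ proj1_sig V x))
        (compl_down_upset _ _).

Definition Up_top (X : Poset) : UpT X := exist _ (fun _ => True) (full_upset X).

Definition Up_ISL (X : Poset) : ISLsig :=
  {| car := UpT X; meet := Up_meet X; imp := Up_imp X; top := Up_top X |}.

Definition Up_ISL_map (X Y : Poset) (p : X -> option Y) (U : UpT Y) : UpT X :=
  exist _ (compl_down X (fun x => exists y, p x = Some y /\ ~ proj1_sig U y))
        (compl_down_upset _ _).

(* (i) Let F be in B_* and f^{-1}[F] ⊆ H with H in A_*.  The filter generated
   by F and f[H] misses f[A \ H]; by Zorn's lemma it extends to a filter M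
   maximal among those missing f[A \ H].  M is meet irreducible because
   A \ H, hence f[A \ H], is up-directed (this is where meet irreducibility
   of H enters), and f^{-1}[M] = H.
   (ii) Only the implication needs thought: positivity lifts a witness
   above p(z) in Y to a point above z in dom(p). *)

From Stdlib Require Import Classical ClassicalEpsilon FunctionalExtensionality PropExtensionality.
From mathcomp Require boolp classical_sets.

Definition included {T : Type} (X Y : T -> Prop) : Prop := forall t, X t -> Y t.

Definition disjoint {T : Type} (X Y : T -> Prop) : Prop :=
  forall t, X t -> Y t -> False.

Definition chain {T : Type} (C : (T -> Prop) -> Prop) : Prop :=
  forall X Y, C X -> C Y -> included X Y \/ included Y X.

Definition union_of {T : Type} (C : (T -> Prop) -> Prop) : T -> Prop :=
  fun t => exists X, C X /\ X t.

Lemma Zorn_above (T : Type) (P : (T -> Prop) -> Prop) (X0 : T -> Prop) :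
  P X0 ->
  (forall C, (exists X, C X) -> chain C -> (forall X, C X -> P X) ->
     P (union_of C)) ->
  exists M, P M /\ included X0 M /\
    (forall N, P N -> included M N -> included N M).
Proof.
  intros PX0 P_union.
  pose (T' := {X : T -> Prop | P X /\ included X0 X}).
  pose (R := fun U V : T' => boolp.asbool (included (proj1_sig U) (proj1_sig V))).
  assert (R_incl : forall U V, R U V = true <-> included (proj1_sig U) (proj1_sig V)).
  { intros U V. split; [apply boolp.asboolW | apply boolp.asboolT]. }
  pose (bottom := exist _ X0 (conj PX0 (fun _ h => h)) : T').
  destruct (@classical_sets.ZL_preorder T' bottom R) as [[M [PM X0M]] Mmax].
  - intro U. apply R_incl. intros t h. exact h.
  - intros U V W UV VW. apply R_incl. intros t h.
    apply (proj1 (R_incl _ _) VW), (proj1 (R_incl _ _) UV), h.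
  - intros Ch Ch_total.
    destruct (classic (exists U, Ch U)) as [[U0 ChU0] | Ch_empty].
    + pose (C := fun X => exists U : T', Ch U /\ proj1_sig U = X).
      assert (PC : P (union_of C)).
      { apply P_union.
        - exists (proj1_sig U0). exists U0. split; [exact ChU0 | reflexivity].
        - intros X Y [U [ChU <-]] [V [ChV <-]].
          destruct (Ch_total U V ChU ChV) as [UV | VU];
            [left | right]; apply R_incl; assumption.
        - intros X [U [_ <-]]. exact (proj1 (proj2_sig U)). }
      assert (X0C : included X0 (union_of C)).
      { intros t h. exists (proj1_sig U0). split.
        - exists U0. split; [exact ChU0 | reflexivity].
        - exact (proj2 (proj2_sig U0) t h). }
      exists (exist _ (union_of C) (conj PC X0C)).
      intros U ChU. apply R_incl. intros t h.
      exists (proj1_sig U). split; [exists U; split; [exact ChU | reflexivity] | exact h].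
    + exists bottom. intros U ChU. exfalso. apply Ch_empty. exists U. exact ChU.
  - exists M. split; [exact PM | split; [exact X0M |]].
    intros N PN MN.
    pose (N' := exist _ N (conj PN (fun t h => MN t (X0M t h))) : T').
    apply (R_incl N' (exist _ M (conj PM X0M))), Mmax, R_incl, MN.
Qed.

Lemma sig_pred_ext (T : Type) (P : (T -> Prop) -> Prop) (U V : {X | P X}) :
  (forall t, proj1_sig U t <-> proj1_sig V t) -> U = V.
Proof.
  destruct U as [U PU], V as [V PV]; simpl. intro UV.
  assert (U = V) as <-.
  { apply functional_extensionality. intro t. apply propositional_extensionality, UV. }
  f_equal. apply proof_irrelevance.
Qed.

Section ImplicativeSemilattice.

Variable A : ISLsig.
Hypothesis HA : is_ISL A.

Local Notation "a <= b" := (isl_le A a b).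
Local Notation "a ⊓ b" := (meet A a b) (at level 40, left associativity).
Local Notation "a --> b" := (imp A a b) (at level 55, right associativity).

Lemma isl_meetA a b c : a ⊓ (b ⊓ c) = (a ⊓ b) ⊓ c.
Proof. exact (proj1 HA a b c). Qed.

Lemma isl_meetC a b : a ⊓ b = b ⊓ a.
Proof. exact (proj1 (proj2 HA) a b). Qed.

Lemma isl_meetxx a : a ⊓ a = a.
Proof. exact (proj1 (proj2 (proj2 HA)) a). Qed.

Lemma isl_le_top a : a <= top A.
Proof. exact (proj1 (proj2 (proj2 (proj2 HA))) a). Qed.

Lemma isl_imp_intro a b c : c ⊓ a <= b -> c <= a --> b.
Proof. exact (proj1 (proj2 (proj2 (proj2 (proj2 HA))) a b c)). Qed.

Lemma isl_imp_elim a b c : c <= a --> b -> c ⊓ a <= b.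
Proof. exact (proj2 (proj2 (proj2 (proj2 (proj2 HA))) a b c)). Qed.

Lemma isl_le_refl a : a <= a.
Proof. apply isl_meetxx. Qed.

Lemma isl_le_trans a b c : a <= b -> b <= c -> a <= c.
Proof.
  unfold isl_le. intros ab bc.
  rewrite <- ab, <- isl_meetA, bc. reflexivity.
Qed.

Lemma isl_leIl a b : a ⊓ b <= a.
Proof. unfold isl_le. rewrite (isl_meetC (a ⊓ b) a), isl_meetA, isl_meetxx. reflexivity. Qed.

Lemma isl_leIr a b : a ⊓ b <= b.
Proof. unfold isl_le. rewrite <- isl_meetA, isl_meetxx. reflexivity. Qed.

Lemma isl_lexI a b c : c <= a -> c <= b -> c <= a ⊓ b.
Proof. unfold isl_le. intros ca cb. rewrite isl_meetA, ca, cb. reflexivity. Qed.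

Lemma isl_meet_mono_r a b c : a <= b -> c ⊓ a <= c ⊓ b.
Proof.
  intro ab. apply isl_lexI; [apply isl_leIl |].
  apply (isl_le_trans _ a); [apply isl_leIr | exact ab].
Qed.

Lemma isl_imp_mp a b : a ⊓ (a --> b) <= b.
Proof.
  rewrite isl_meetC. apply isl_imp_elim, isl_le_refl.
Qed.

Lemma isl_le_imp a b : b <= a --> b.
Proof. apply isl_imp_intro, isl_leIl. Qed.

Lemma isl_top_le_imp_self a : top A <= a --> a.
Proof. apply isl_imp_intro, isl_leIr. Qed.

Lemma isl_imp_swap a u x : u <= a --> x -> a <= u --> x.
Proof.
  intro u_ax. apply isl_imp_intro. rewrite isl_meetC. apply isl_imp_elim, u_ax.
Qed.

Lemma isl_imp_mono_r a b b' : b <= b' -> a --> b <= a --> b'.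
Proof.
  intro bb'. apply isl_imp_intro. rewrite isl_meetC.
  apply (isl_le_trans _ b); [apply isl_imp_mp | exact bb'].
Qed.

Lemma isl_imp_anti_l a a' b : a' <= a -> a --> b <= a' --> b.
Proof.
  intro a'a. apply isl_imp_intro. rewrite isl_meetC.
  apply (isl_le_trans _ (a ⊓ (a --> b))); [| apply isl_imp_mp].
  rewrite (isl_meetC a'), (isl_meetC a). apply isl_meet_mono_r, a'a.
Qed.

Lemma isl_imp_meet a x y : (a --> x) ⊓ (a --> y) <= a --> (x ⊓ y).
Proof.
  apply isl_imp_intro. rewrite isl_meetC.
  apply isl_lexI.
  - apply (isl_le_trans _ (a ⊓ (a --> x))); [| apply isl_imp_mp].
    apply isl_meet_mono_r, isl_leIl.
  - apply (isl_le_trans _ (a ⊓ (a --> y))); [| apply isl_imp_mp].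
    apply isl_meet_mono_r, isl_leIr.
Qed.

Lemma filter_top F : is_filter A F -> F (top A).
Proof. intros [[a Fa] [F_up _]]. exact (F_up a _ Fa (isl_le_top a)). Qed.

Lemma filter_mp F a b : is_filter A F -> F a -> F (a --> b) -> F b.
Proof.
  intros [_ [F_up F_meet]] Fa Fab. exact (F_up _ _ (F_meet _ _ Fa Fab) (isl_imp_mp a b)).
Qed.

(* By the deduction theorem this is the filter generated by F and a. *)
Definition filter_adjoin (F : A -> Prop) (a : A) : A -> Prop := fun x => F (a --> x).

Lemma filter_adjoin_filter F a : is_filter A F -> is_filter A (filter_adjoin F a).
Proof.
  intro HF. pose proof HF as [_ [F_up F_meet]]. split; [| split].
  - exists (top A). exact (F_up _ _ (filter_top F HF) (isl_le_imp a _)).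
  - intros x y Fx xy. exact (F_up _ _ Fx (isl_imp_mono_r a x y xy)).
  - intros x y Fx Fy. exact (F_up _ _ (F_meet _ _ Fx Fy) (isl_imp_meet a x y)).
Qed.

Lemma filter_adjoin_sub F a : is_filter A F -> included F (filter_adjoin F a).
Proof. intros [_ [F_up _]] x Fx. exact (F_up _ _ Fx (isl_le_imp a x)). Qed.

Lemma filter_adjoin_mem F a : is_filter A F -> filter_adjoin F a a.
Proof. intro HF. exact (proj1 (proj2 HF) _ _ (filter_top F HF) (isl_top_le_imp_self a)). Qed.

Lemma filter_adjoin_anti F a a' :
  is_filter A F -> a' <= a -> included (filter_adjoin F a) (filter_adjoin F a').
Proof. intros [_ [F_up _]] a'a x Fx. exact (F_up _ _ Fx (isl_imp_anti_l a a' x a'a)). Qed.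

Lemma meet_irreducible_compl_directed H a1 a2 :
  meet_irreducible A H -> ~ H a1 -> ~ H a2 ->
  exists c, ~ H c /\ a1 <= c /\ a2 <= c.
Proof.
  intros [HH [_ H_irr]] Na1 Na2. apply NNPP. intro no_c. apply H_irr.
  assert (adjoin_new : forall a, ~ H a -> ~ same_set _ (filter_adjoin H a) H).
  { intros a Na same. exact (Na (proj1 (same a) (filter_adjoin_mem H a HH))). }
  exists (filter_adjoin H a1), (filter_adjoin H a2).
  do 4 (split; [auto using filter_adjoin_filter |]).
  intro x. split.
  - intro Hx. split; apply filter_adjoin_sub; assumption.
  - intros [H1x H2x]. apply NNPP. intro Nx. apply no_c.
    exists (((a1 --> x) ⊓ (a2 --> x)) --> x). split; [| split].
    + intro Hc. exact (Nx (filter_mp H _ x HH (proj2 (proj2 HH) _ _ H1x H2x) Hc)).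
    + apply isl_imp_swap, isl_leIl.
    + apply isl_imp_swap, isl_leIr.
Qed.

End ImplicativeSemilattice.

Section MaximalFilters.

Variable A : ISLsig.

Lemma chain_union_filter (C : (A -> Prop) -> Prop) :
  (exists X, C X) -> chain C -> (forall X, C X -> is_filter A X) ->
  is_filter A (union_of C).
Proof.
  intros [X0 CX0] C_chain C_filter. split; [| split].
  - destruct (proj1 (C_filter X0 CX0)) as [a X0a]. exists a, X0. split; assumption.
  - intros a b [X [CX Xa]] ab. exists X. split; [exact CX |].
    exact (proj1 (proj2 (C_filter X CX)) a b Xa ab).
  - intros a b [X [CX Xa]] [Y [CY Yb]].
    destruct (C_chain X Y CX CY) as [XY | YX].
    + exists Y. split; [exact CY |]. exact (proj2 (proj2 (C_filter Y CY)) a b (XY a Xa) Yb).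
    + exists X. split; [exact CX |]. exact (proj2 (proj2 (C_filter X CX)) a b Xa (YX b Yb)).
Qed.

Lemma exists_maximal_filter_disjoint (F0 S : A -> Prop) :
  is_filter A F0 -> disjoint F0 S ->
  exists M, is_filter A M /\ disjoint M S /\ included F0 M /\
    (forall N, is_filter A N -> disjoint N S -> included M N -> included N M).
Proof.
  intros HF0 F0S.
  destruct (Zorn_above A (fun M => is_filter A M /\ disjoint M S) F0)
    as [M [[HM MS] [F0M M_max]]].
  - split; assumption.
  - intros C C_ne C_chain C_P. split.
    + apply chain_union_filter; [exact C_ne | exact C_chain |].
      intros X CX. exact (proj1 (C_P X CX)).
    + intros a [X [CX Xa]]. exact (proj2 (C_P X CX) a Xa).
  - exists M. do 3 (split; [assumption |]).
    intros N HN NS. exact (M_max N (conj HN NS)).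
Qed.

Lemma maximal_filter_disjoint_irreducible (M S : A -> Prop) :
  is_filter A M -> disjoint M S ->
  (forall N, is_filter A N -> disjoint N S -> included M N -> included N M) ->
  (exists s, S s) ->
  (forall s1 s2, S s1 -> S s2 -> exists s, S s /\ isl_le A s1 s /\ isl_le A s2 s) ->
  meet_irreducible A M.
Proof.
  intros HM MS M_max [s0 Ss0] S_directed. split; [exact HM | split].
  - exists s0. intro Ms0. exact (MS s0 Ms0 Ss0).
  - intros [G1 [G2 [HG1 [HG2 [G1M [G2M M_G12]]]]]].
    assert (meets_S : forall G, is_filter A G -> ~ same_set _ G M ->
                        included M G -> exists s, S s /\ G s).
    { intros G HG GM MG. apply NNPP. intro no_s. apply GM. intro b.
      split; [| apply MG]. apply (M_max G HG); [| exact MG].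
      intros s Gs Ss. apply no_s. exists s. split; assumption. }
    destruct (meets_S G1 HG1 G1M) as [s1 [Ss1 G1s1]].
    { intros b Mb. exact (proj1 (proj1 (M_G12 b) Mb)). }
    destruct (meets_S G2 HG2 G2M) as [s2 [Ss2 G2s2]].
    { intros b Mb. exact (proj2 (proj1 (M_G12 b) Mb)). }
    destruct (S_directed s1 s2 Ss1 Ss2) as [s [Ss [s1s s2s]]].
    apply (MS s); [| exact Ss]. apply M_G12. split.
    + exact (proj1 (proj2 HG1) _ _ G1s1 s1s).
    + exact (proj1 (proj2 HG2) _ _ G2s2 s2s).
Qed.

End MaximalFilters.

Section FilterPreimage.

Variables A B : ISLsig.
Hypothesis HA : is_ISL A.
Hypothesis HB : is_ISL B.
Variable f : A -> B.
Hypothesis f_hom : is_hom A B f.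

Lemma hom_mono a b : isl_le A a b -> isl_le B (f a) (f b).
Proof. unfold isl_le. intro ab. rewrite <- (proj1 f_hom), ab. reflexivity. Qed.

Definition filter_join_image (F : B -> Prop) (H : A -> Prop) : B -> Prop :=
  fun b => exists h, H h /\ filter_adjoin B F (f h) b.

Section JoinImage.

Variables (F : B -> Prop) (H : A -> Prop).
Hypothesis HF : is_filter B F.
Hypothesis HH : is_filter A H.

Lemma filter_join_image_filter : is_filter B (filter_join_image F H).
Proof.
  destruct HH as [[h0 Hh0] [_ H_meet]]. split; [| split].
  - exists (f h0), h0. split; [exact Hh0 | apply filter_adjoin_mem; assumption].
  - intros x y [h [Hh Fx]] xy. exists h. split; [exact Hh |].
    exact (proj1 (proj2 (filter_adjoin_filter B HB F (f h) HF)) x y Fx xy).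
  - intros x y [h1 [Hh1 Fx]] [h2 [Hh2 Fy]].
    exists (meet A h1 h2). split; [exact (H_meet _ _ Hh1 Hh2) |].
    rewrite (proj1 f_hom). apply (filter_adjoin_filter B HB F _ HF).
    + exact (filter_adjoin_anti B HB F (f h1) _ HF (isl_leIl B HB (f h1) (f h2)) x Fx).
    + exact (filter_adjoin_anti B HB F (f h2) _ HF (isl_leIr B HB (f h1) (f h2)) y Fy).
Qed.

Lemma filter_join_image_sub : included F (filter_join_image F H).
Proof.
  destruct HH as [[h0 Hh0] _]. intros b Fb. exists h0.
  split; [exact Hh0 | apply filter_adjoin_sub; assumption].
Qed.

Lemma filter_join_image_mem a : H a -> filter_join_image F H (f a).
Proof. intro Ha. exists a. split; [exact Ha | apply filter_adjoin_mem; assumption]. Qed.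

Lemma filter_join_image_preimage :
  included (fun a => F (f a)) H -> included (fun a => filter_join_image F H (f a)) H.
Proof.
  intros FH a [h [Hh Fha]]. unfold filter_adjoin in Fha.
  rewrite <- (proj1 (proj2 f_hom)) in Fha.
  exact (filter_mp A HA H h a HH Hh (FH _ Fha)).
Qed.

End JoinImage.

Lemma f_star_SomeE F G :
  f_star A B f F = Some G -> forall a, proj1_sig G a <-> proj1_sig F (f a).
Proof.
  unfold f_star. destruct (excluded_middle_informative _); [| discriminate].
  intro E. injection E as <-. reflexivity.
Qed.

Lemma f_star_Some F G :
  (forall a, proj1_sig F (f a) <-> proj1_sig G a) -> f_star A B f F = Some G.
Proof.
  intro FG.
  assert (preimage_G : (fun a => proj1_sig F (f a)) = proj1_sig G).
  { apply functional_extensionality. intro a. apply propositional_extensionality, FG. }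
  unfold f_star. destruct (excluded_middle_informative _) as [MI | notMI].
  - f_equal. apply sig_pred_ext. exact FG.
  - exfalso. apply notMI. rewrite preimage_G. exact (proj2_sig G).
Qed.

Lemma f_star_order_preserving :
  partial_order_preserving (MIF B) (MIF A) (MIF_le B) (MIF_le A) (f_star A B f).
Proof.
  intros F1 F2 G1 G2 E1 E2 F12 a G1a.
  apply (f_star_SomeE F2 G2 E2), F12, (f_star_SomeE F1 G1 E1), G1a.
Qed.

Lemma f_star_positive (F : MIF B) (G H : MIF A) :
  f_star A B f F = Some G -> MIF_le A G H ->
  exists M, MIF_le B F M /\ f_star A B f M = Some H.
Proof.
  intros FG GH.
  assert (F_pre_H : included (fun a => proj1_sig F (f a)) (proj1_sig H)).
  { intros a Fa. apply GH, (f_star_SomeE F G FG), Fa. }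
  clear FG GH. destruct F as [F MI_F], H as [H MI_H]. simpl in F_pre_H |- *.
  pose proof (proj1 MI_F) as HF. pose proof (proj1 MI_H) as HH.
  pose (S := fun b => exists a, ~ H a /\ b = f a).
  destruct (exists_maximal_filter_disjoint B (filter_join_image F H) S)
    as [M [HM [MS [JM M_max]]]].
  - exact (filter_join_image_filter F H HF HH).
  - intros b Jb [a [Na ->]]. exact (Na (filter_join_image_preimage F H HH F_pre_H a Jb)).
  - assert (MI_M : meet_irreducible B M).
    { apply (maximal_filter_disjoint_irreducible B M S HM MS M_max).
      - destruct (proj1 (proj2 MI_H)) as [a Na]. exists (f a), a. split; [exact Na | reflexivity].
      - intros s1 s2 [a1 [Na1 ->]] [a2 [Na2 ->]].
        destruct (meet_irreducible_compl_directed A HA H a1 a2 MI_H Na1 Na2)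
          as [c [Nc [a1c a2c]]].
        exists (f c). split; [exists c; split; [exact Nc | reflexivity] |].
        split; apply hom_mono; assumption. }
    exists (exist _ M MI_M). split.
    + intros b Fb. exact (JM b (filter_join_image_sub F H HF HH b Fb)).
    + apply f_star_Some. intro a. simpl. split.
      * intro Mfa. apply NNPP. intro Na. exact (MS (f a) Mfa (ex_intro _ a (conj Na eq_refl))).
      * intro Ha. exact (JM _ (filter_join_image_mem F H HF a Ha)).
Qed.

End FilterPreimage.

Lemma in_Up_imp (X : Poset) (U V : UpT X) x :
  proj1_sig (Up_imp X U V) x <->
  (forall z, ple X x z -> proj1_sig U z -> proj1_sig V z).
Proof.
  simpl. unfold compl_down. split.
  - intros no_z z xz Uz. apply NNPP. intro Nz. apply no_z. exists z. auto.
  - intros all_z [z [xz [Uz Nz]]]. exact (Nz (all_z z xz Uz)).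
Qed.

Lemma in_Up_ISL_map (X Y : Poset) (p : X -> option Y) (U : UpT Y) x :
  proj1_sig (Up_ISL_map X Y p U) x <->
  (forall z y, ple X x z -> p z = Some y -> proj1_sig U y).
Proof.
  simpl. unfold compl_down. split.
  - intros no_z z y xz pz. apply NNPP. intro Ny. apply no_z. exists z. eauto.
  - intros all_z [z [xz [y [pz Ny]]]]. exact (Ny (all_z z y xz pz)).
Qed.

Section UpMap.

Variables (X Y : Poset) (p : X -> option Y).
Local Notation p_star := (Up_ISL_map X Y p).

Lemma Up_ISL_map_meet U V : p_star (Up_meet Y U V) = Up_meet X (p_star U) (p_star V).
Proof.
  apply sig_pred_ext. intro x.
  rewrite in_Up_ISL_map. cbn [proj1_sig Up_meet]. rewrite !in_Up_ISL_map. split.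
  - intro UV. split; intros z y xz pz; apply (UV z y xz pz).
  - intros [HU HV] z y xz pz. split; [exact (HU z y xz pz) | exact (HV z y xz pz)].
Qed.

Lemma Up_ISL_map_top : p_star (Up_top Y) = Up_top X.
Proof.
  apply sig_pred_ext. intro x. rewrite in_Up_ISL_map. simpl. split; auto.
Qed.

Lemma Up_ISL_map_imp U V :
  partial_positive_pmorphism X Y (ple X) (ple Y) p ->
  p_star (Up_imp Y U V) = Up_imp X (p_star U) (p_star V).
Proof.
  intros [p_mono p_lift]. apply sig_pred_ext. intro x.
  rewrite in_Up_ISL_map, in_Up_imp. split.
  - intros UV z xz z_in_U. apply in_Up_ISL_map. intros z' y zz' pz'.
    assert (y_in_U : proj1_sig U y).
    { exact (proj1 (in_Up_ISL_map X Y p U z) z_in_U z' y zz' pz'). }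
    pose proof (UV z' y (ple_trans X _ _ _ xz zz') pz') as y_in_UV.
    exact (proj1 (in_Up_imp Y U V y) y_in_UV y (ple_refl Y y) y_in_U).
  - intros UV z y xz pz. apply in_Up_imp. intros w yw Uw.
    destruct (p_lift z y w pz yw) as [z' [zz' pz']].
    assert (z'_in_U : proj1_sig (p_star U) z').
    { apply in_Up_ISL_map. intros z'' v z'z'' pz''.
      exact (proj2_sig U w v Uw (p_mono z' z'' w v pz' pz'' z'z'')). }
    pose proof (UV z' (ple_trans X _ _ _ xz zz') z'_in_U) as z'_in_V.
    exact (proj1 (in_Up_ISL_map X Y p V z') z'_in_V z' w (ple_refl X z') pz').
Qed.

End UpMap.

Theorem proposition3p11 :
  (forall (A B : ISLsig), is_ISL A -> is_ISL B ->
     forall f : A -> B, is_hom A B f ->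
       partial_positive_pmorphism (MIF B) (MIF A) (MIF_le B) (MIF_le A)
         (f_star A B f)) /\
  (forall (X Y : Poset) (p : X -> option Y),
     partial_positive_pmorphism X Y (ple X) (ple Y) p ->
     is_hom (Up_ISL Y) (Up_ISL X) (Up_ISL_map X Y p)).
Proof.
  split.
  - intros A B HA HB f f_hom. split.
    + exact (f_star_order_preserving A B f).
    + intros F G H. exact (f_star_positive A B HA HB f f_hom F G H).
  - intros X Y p p_pos. split; [| split].
    + exact (Up_ISL_map_meet X Y p).
    + intros U V. exact (Up_ISL_map_imp X Y p U V p_pos).
    + exact (Up_ISL_map_top X Y p).
Qed.
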